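(* Let $G=([n],E)$ be a persistent graph and let $a,b,c$ be vertices such that $b<c$, $\{b,c\} \subseteq N(a)$, and there is no vertex $x \in N[a]$ with $b < x < c$. Then $\{b,c\} \in E$.
   Context: $[n]=\{1,\dots,n\}$. A graph $G=([n],E)$ is persistent if (1) it contains the Hamilton path $1,2,\dots,n$, i.e. $\{i,i+1\}\in E$ for all $1\le i<n$; (2) (X-property) if $\{a,c\}\in E$ and $\{b,d\}\in E$ for vertices $a<b<c<d$, then $\{a,d\}\in E$; (3) (bar-property) for every edge $\{a,b\}\in E$ with $a<b-1$ there is a vertex $x$ with $a<x<b$ such that $\{a,x\}\in E$ and $\{x,b\}\in E$. $N(v)$ denotes the set of neighbors of $v$ and $N[v]=N(v)\cup\{v\}$. *)

From mathcomp Require Import all_boot.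
Set Implicit Arguments. Unset Strict Implicit. Unset Printing Implicit Defensive.

Definition in_vset (n v : nat) : bool := (1 <= v) && (v <= n).

Definition simple_graph_on (n : nat) (E : rel nat) : Prop :=
  (forall u v, E u v = E v u) /\
  (forall v, ~~ E v v) /\
  (forall u v, E u v -> in_vset n u && in_vset n v).

Definition persistent (n : nat) (E : rel nat) : Prop :=
  simple_graph_on n E /\
  (forall i, 1 <= i -> i < n -> E i i.+1) /\
  (forall a b c d, a < b -> b < c -> c < d -> E a c -> E b d -> E a d) /\
  (forall a b, a < b.-1 -> E a b -> exists x, [/\ a < x, x < b, E a x & E x b]).

Definition closed_nbhd (E : rel nat) (v x : nat) : bool := (x == v) || E v x.

From mathcomp Require Import all_boot.
From mathcomp Require Import zify.

Set Implicit Arguments.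
Unset Strict Implicit.
Unset Printing Implicit Defensive.

(* Suppose first a < b.  Starting from the edge {a, c}, split the
   current edge {y, c} (a <= y <= b) with the bar-property into {y, z}, {z, c}.
   A split point z in (b, c) would be a neighbour of a (directly if y = a, by
   the X-property applied to {a, b} and {y, z} otherwise), so z <= b and the
   walk continues until y = b.  The case c < a is the mirror image under
   i |-> n + 1 - i, and b < a < c is excluded since a itself lies in N[a]. *)

Definition X_property (E : rel nat) : Prop :=
  forall a b c d, a < b -> b < c -> c < d -> E a c -> E b d -> E a d.

Definition bar_property (E : rel nat) : Prop :=
  forall a b, a < b.-1 -> E a b -> exists x, [/\ a < x, x < b, E a x & E x b].

Lemma persistent_X n E : persistent n E -> X_property E.
Proof. by case=> _ [_ []]. Qed.

Lemma persistent_bar n E : persistent n E -> bar_property E.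
Proof. by case=> _ [_ []]. Qed.

Lemma consecutive_nbrs_adj_gt (E : rel nat) a b c :
  X_property E -> bar_property E ->
  a < b -> b < c -> E a b -> E a c -> (forall x, b < x < c -> ~~ E a x) ->
  E b c.
Proof.
move=> HX Hbar ab bc Eab Eac gap.
suff walk k y : b - y = k -> a <= y <= b -> E y c -> E b c.
  by apply: (walk _ a erefl) => //; rewrite leqnn ltnW.
elim/ltn_ind: k y => k IH y def_k /andP[ay yb] Eyc.
have [<- // | yNb] := eqVneq y b.
have [|z [yz zc Eyz Ezc]] := Hbar y c _ Eyc; first by lia.
have [zb | bz] := leqP z b.
  by apply: (IH (b - z) _ z) => //; lia.
have Eaz : E a z.
  have [-> // | aNy] := eqVneq a y.
  by apply: (HX a y b z) => //; lia.
by have := gap z; rewrite bz zc Eaz => /(_ isT).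
Qed.

Section Mirror.

Variables (n : nat) (E : rel nat).
Hypothesis HE : persistent n E.

(* Truncated subtraction is harmless: both ends of an edge of [mirror] lie in [1, n]. *)
Definition mirror : rel nat := fun u v => E (n.+1 - u) (n.+1 - v).

Let E_sym u v : E u v = E v u.
Proof. by case: HE => -[sym _] _; apply: sym. Qed.

Let edge_vset u v : E u v -> in_vset n u && in_vset n v.
Proof. by case: HE => -[_ [_ vset]] _; apply: vset. Qed.

Lemma mirror_edge_vset u v : mirror u v -> in_vset n u && in_vset n v.
Proof. by rewrite /mirror => /edge_vset; rewrite /in_vset; lia. Qed.

Lemma mirror_X : X_property mirror.
Proof.
move=> a b c d ab bc cd Eac Ebd.
move: (mirror_edge_vset Eac) (mirror_edge_vset Ebd); rewrite /in_vset => ac_vset bd_vset.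
rewrite /mirror E_sym.
by apply: (@persistent_X _ _ HE (n.+1 - d) (n.+1 - c) (n.+1 - b)); first [lia | rewrite E_sym].
Qed.

Lemma mirror_bar : bar_property mirror.
Proof.
move=> a b ab Eab.
move: (mirror_edge_vset Eab); rewrite /in_vset => ab_vset.
have Eba : E (n.+1 - b) (n.+1 - a) by rewrite E_sym.
have [|x [bx xa Ebx Exa]] := persistent_bar HE _ Eba; first by lia.
exists (n.+1 - x); rewrite /mirror !subKn; try lia.
by split; [lia | lia | rewrite E_sym | rewrite E_sym].
Qed.

Lemma consecutive_nbrs_adj_lt a b c :
  b < c -> c < a -> E a b -> E a c -> (forall x, b < x < c -> ~~ E a x) ->
  E b c.
Proof.
move=> bc ca Eab Eac gap.
move: (edge_vset Eab) (edge_vset Eac); rewrite /in_vset => ab_vset ac_vset.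
have mirrorE u v : u <= n -> v <= n -> mirror (n.+1 - u) (n.+1 - v) = E u v.
  by move=> un vn; rewrite /mirror !subKn //; lia.
rewrite E_sym -mirrorE; try lia.
apply: (consecutive_nbrs_adj_gt mirror_X mirror_bar (_ : n.+1 - a < n.+1 - c)); try lia.
- by rewrite mirrorE //; lia.
- by rewrite mirrorE //; lia.
move=> x /andP[cx xb]; rewrite /mirror subKn; last by lia.
by apply: gap; apply/andP; lia.
Qed.

End Mirror.

Theorem lemma5 (n : nat) (E : rel nat) (a b c : nat) :
  persistent n E ->
  in_vset n a -> in_vset n b -> in_vset n c ->
  b < c -> E a b -> E a c ->
  (forall x, in_vset n x -> closed_nbhd E a x -> ~~ ((b < x) && (x < c))) ->
  E b c.
Proof.
move=> HE Ha Hb Hc bc Eab Eac H.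
have gap x : b < x < c -> ~~ E a x.
  move=> xbc; apply/negP => Eax.
  have xV : in_vset n x by move: Hb Hc xbc; rewrite /in_vset; lia.
  by move: (H x xV); rewrite /closed_nbhd Eax orbT xbc => /(_ isT).
have [ab | ba] := ltnP a b.
  exact: (consecutive_nbrs_adj_gt (persistent_X HE) (persistent_bar HE) ab bc Eab Eac gap).
have [ca | ac] := ltnP c a; first exact: (consecutive_nbrs_adj_lt HE bc ca Eab Eac gap).
have [[_ [irr _]] _] := HE.
have aNb : a != b by apply: contraTneq Eab => <-; apply: irr.
have aNc : a != c by apply: contraTneq Eac => <-; apply: irr.
have bac : b < a < c by apply/andP; lia.
by have := H a Ha; rewrite /closed_nbhd eqxx bac => /(_ isT).
Qed.
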